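(* Let $n\ge3$ and let $\mathcal F$ be a non-empty simplicial complex on the vertex set $[n]=\{1,\dots,n\}$ of dimension $n-3$, each of whose facets is of the form $[n]\setminus\{i,i+1\}$ for some $i$. Assume moreover that whenever $[n]\setminus\{i,i+1\}$ is a facet of $\mathcal F$, neither $[n]\setminus\{i+1,i+2\}$ nor $[n]\setminus\{i+2,i+3\}$ is a facet of $\mathcal F$. Then $\mathcal F$ has trivial (reduced) homology groups. *)

From mathcomp Require Import all_boot all_order all_algebra.
Set Implicit Arguments. Unset Strict Implicit. Unset Printing Implicit Defensive.
Import GRing.Theory Num.Theory.
Local Open Scope ring_scope.

(* Vertices [n] = {1..n} are represented by 'I_n = {0..n-1}; indices cyclic mod n. *)

Definition simplicial_complex (n : nat) (F : {set {set 'I_n}}) : Prop :=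
  forall s t : {set 'I_n}, s \in F -> t \subset s -> t \in F.

Definition is_facet (n : nat) (F : {set {set 'I_n}}) (s : {set 'I_n}) : Prop :=
  s \in F /\ (forall t, t \in F -> s \subset t -> t = s).

Definition cface (n : nat) (i : nat) : {set 'I_n} :=
  [set j : 'I_n | (nat_of_ord j != i %% n)%N && (nat_of_ord j != i.+1 %% n)%N].

Definition chain (n : nat) := {ffun {set 'I_n} -> int}.

(* chains of the complex F of size k (dimension k-1), k = 0 is the augmentation *)
Definition is_kchain (n : nat) (F : {set {set 'I_n}}) (k : nat) (c : chain n) : Prop :=
  forall s, c s != 0 -> s \in F /\ #|s| = k.

(* simplicial boundary: for tau = [v_0 < ... < v_k],
   d tau = sum_i (-1)^i (tau \ {v_i}); the index of v in tau is #|{u in tau | u < v}| *)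
Definition bd (n : nat) (c : chain n) : chain n :=
  [ffun s : {set 'I_n} => \sum_(v : 'I_n | v \notin s)
      (-1) ^+ #|[set u in s | (u < v)%N]| * c (v |: s)].

Definition reduced_homology_trivial (n : nat) (F : {set {set 'I_n}}) : Prop :=
  forall (k : nat) (c : chain n), is_kchain F k c -> bd c = 0 ->
    exists d : chain n, is_kchain F k.+1 d /\ bd d = c.

From mathcomp Require Import all_boot all_order all_algebra ring.
Set Implicit Arguments. Unset Strict Implicit. Unset Printing Implicit Defensive.
Import GRing.Theory Num.Theory.

(* If [n]\{i,i+1} is a facet, the separation hypothesis rules out the only two
   facets [n]\{i+1,i+2} and [n]\{i+2,i+3} that miss the vertex i+2, so every
   facet contains i+2 and the complex is a cone with apex i+2.  Coning with the
   apex is a chain contraction of the augmented chain complex of a cone: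
   d (v * c) + v * (d c) = c. *)

Section Cone.

Local Open Scope ring_scope.

Variable n : nat.
Implicit Types (s t : {set 'I_n}) (c : chain n).

Definition bd_sign s (w : 'I_n) : int := (-1) ^+ #|[set u in s | (u < w)%N]|.

Lemma bd_signK s w : bd_sign s w * bd_sign s w = 1.
Proof. by rewrite /bd_sign -exprD -signr_odd oddD addbb. Qed.

Lemma bd_signU1 s v w : v \notin s ->
  bd_sign (v |: s) w = bd_sign s w * (-1) ^+ (v < w)%N.
Proof.
move=> vs; rewrite /bd_sign -exprD; congr (_ ^+ _).
case: ltnP => vw.
- have -> : [set u in v |: s | (u < w)%N] = v |: [set u in s | (u < w)%N].
    by apply/setP => x; rewrite !inE; case: eqP => [->|]; rewrite ?vw ?orbF.
  by rewrite cardsU1 inE (negPf vs) addnC.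
- have -> : [set u in v |: s | (u < w)%N] = [set u in s | (u < w)%N].
    apply/setP => x; rewrite !inE; case: eqP => [->|] //=.
    by rewrite ltnNge vw !andbF.
  by rewrite addn0.
Qed.

Lemma bdE c s : bd c s = \sum_(v | v \notin s) bd_sign s v * c (v |: s).
Proof. by rewrite ffunE. Qed.

Definition cone (v : 'I_n) c : chain n :=
  [ffun t : {set 'I_n} => if v \in t then bd_sign (t :\ v) v * c (t :\ v) else 0].

Lemma bd_cone_notin v c s : v \notin s -> bd (cone v c) s = c s.
Proof.
move=> vs; rewrite bdE (bigD1 v) //= big1 ?addr0.
  by rewrite ffunE setU11 setU1K // mulrA bd_signK mul1r.
move=> w /andP [ws wv]; rewrite ffunE !inE eq_sym (negPf wv) (negPf vs).
by rewrite mulr0.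
Qed.

Lemma bd_cone_in v c s : v \notin s ->
  bd (cone v c) (v |: s) + bd_sign s v * bd c s = c (v |: s).
Proof.
move=> vs; rewrite !bdE [X in _ + _ * X](bigD1 v) //= mulrDr mulrA bd_signK.
rewrite mul1r addrCA -[RHS]addr0; congr (_ + _).
rewrite mulr_sumr (eq_bigl (fun w => (w \notin s) && (w != v))); last first.
  by move=> w; rewrite !inE negb_or andbC.
rewrite -big_split; apply: big1 => w /andP [ws wv].
have wvsE : (w |: (v |: s)) :\ v = w |: s.
  apply/setP => x; rewrite !inE; case: (eqVneq x v) => [->|] //=.
  by rewrite eq_sym (negPf wv) (negPf vs).
rewrite ffunE !inE eqxx orbT wvsE bd_signU1 // (bd_signU1 _ ws).
by case: (ltngtP v w) => [_|_|/val_inj vw]; rewrite ?expr1 ?expr0 /=;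
  [ring | ring | rewrite vw eqxx in wv].
Qed.

Lemma cone_homotopy v c : bd (cone v c) + cone v (bd c) = c.
Proof.
apply/ffunP => s; rewrite ffunE [cone v _ s]ffunE; case: ifPn => [vs | vs]; last first.
  by rewrite bd_cone_notin // addr0.
by rewrite -{1 2 4}(setD1K vs) setU1K ?setD11 // bd_cone_in ?setD11.
Qed.

Lemma cone_is_kchain (F : {set {set 'I_n}}) v k c :
  (forall s, s \in F -> v |: s \in F) ->
  is_kchain F k c -> is_kchain F k.+1 (cone v c).
Proof.
move=> coneF kc t; rewrite ffunE; case: ifPn => [vt nz|]; last by rewrite eqxx.
have [tvF tvk] : t :\ v \in F /\ #|t :\ v| = k.
  by apply: kc; apply: contraNneq nz => ->; rewrite mulr0.
by rewrite -(setD1K vt) coneF // cardsU1 setD11 tvk.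
Qed.

Lemma cone_reduced_homology_trivial (F : {set {set 'I_n}}) v :
  (forall s, s \in F -> v |: s \in F) -> reduced_homology_trivial F.
Proof.
move=> coneF k c kc bc0; exists (cone v c); split; first exact: cone_is_kchain.
have cone0 : cone v 0 = 0 by apply/ffunP => t; rewrite !ffunE mulr0 if_same.
by have := cone_homotopy v c; rewrite bc0 cone0 addr0.
Qed.

End Cone.

Lemma facet_above n (F : {set {set 'I_n}}) s :
  s \in F -> exists2 f, is_facet F f & s \subset f.
Proof.
move=> sF; have [f /maxsetP [fF fmax] sf] := maxset_exists (P := mem F) sF.
by exists f => //; split => // t tF ft; apply: fmax.
Qed.

Lemma cface_mod n i j : i = j %[mod n] -> cface n i = cface n j.
Proof.
move=> e; apply/setP => x; rewrite !inE e.
by rewrite -[i.+1]addn1 -[j.+1]addn1 -modnDml e modnDml.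
Qed.

Lemma cface_apex n i (f : {set 'I_n}) (v : 'I_n) : v = i.+2 %% n :> nat ->
  f != cface n i.+1 -> f != cface n i.+2 -> (exists j, f = cface n j) -> v \in f.
Proof.
move=> vE f1 f2 [j fE]; rewrite fE inE vE; apply/andP; split.
- by apply: contra f2 => /eqP e; rewrite fE (cface_mod e).
- apply: contra f1 => /eqP e; rewrite fE (@cface_mod _ j i.+1) //.
  by apply/eqP; rewrite -(eqn_modDr 1) !addn1 e.
Qed.

Theorem lemma3p7 (n : nat) (F : {set {set 'I_n}}) :
  (3 <= n)%N ->
  simplicial_complex F ->
  F != set0 ->
  (forall s, is_facet F s -> exists i : nat, s = cface n i) ->
  (forall i : nat, is_facet F (cface n i) ->
     ~ is_facet F (cface n i.+1) /\ ~ is_facet F (cface n i.+2)) ->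
  reduced_homology_trivial F.
Proof.
move=> n3 scF F0 facetE sepF.
have [s0 s0F] := set0Pn _ F0.
have [f0 f0facet _] := facet_above s0F.
have [i f0E] := facetE _ f0facet; rewrite f0E in f0facet.
have [not_facet1 not_facet2] := sepF i f0facet.
pose v : 'I_n := Ordinal (ltn_pmod i.+2 (ltnW (ltnW n3))).
apply: (@cone_reduced_homology_trivial _ _ v) => s sF.
have [f ffacet sf] := facet_above sF.
have vf : v \in f.
  apply: (@cface_apex _ i) => //; last exact: facetE.
  - by apply/eqP => fE; apply: not_facet1; rewrite -fE.
  - by apply/eqP => fE; apply: not_facet2; rewrite -fE.
by apply: (scF f); [case: ffacet | rewrite subUset sub1set vf].
Qed.
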